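(* Let $\mathcal{F}$ be a complete pointed fan in $\mathbb{R}^2$ with $n\ge3$ regions and profile $\beta(\mathcal{F})=(\beta_0,\dots,\beta_{n-1})$. If $n$ is odd, then $\mathcal{F}$ is virtually inscribable and $\dim\mathrm{InSpc}(\mathcal{F})=1$. If $n$ is even, then $\mathcal{F}$ is virtually inscribable if and only if $\beta_0+\beta_2+\beta_4+\cdots+\beta_{n-2}=\pi$, and in this case $\dim\mathrm{InSpc}(\mathcal{F})=2$.
   Context: The regions $R_0,\dots,R_{n-1}$ of $\mathcal{F}$ are ordered counterclockwise, $\beta_i$ is the angle of $R_i$, and indices are taken modulo $n$. Adjacent regions $R_i,R_{i+1}$ share a ray; $s_{R_iR_{i+1}}$ is the reflection in the line spanned by that ray. For a walk $\mathcal{W}=R_{i_0}\cdots R_{i_k}$ in the cyclic adjacency graph set $t_{\mathcal{W}}=s_{R_{i_k}R_{i_{k-1}}}\cdots s_{R_{i_1}R_{i_0}}$. $\mathrm{InSpc}(\mathcal{F})$ denotes the based inscribed space $\{v\in\mathbb{R}^2: t_{\mathcal{W}}(v)=v$ for all closed walks $\mathcal{W}$ starting at $R_0\}$ (its dimension does not depend on the base region), and $\mathcal{F}$ is virtually inscribable if this space is nonzero. *)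

From HB Require Import structures.
From mathcomp Require Import all_boot all_order all_algebra.
From mathcomp Require Import all_classical all_reals.
From mathcomp Require Import trigo.
Set Implicit Arguments. Unset Strict Implicit. Unset Printing Implicit Defensive.
Import Order.TTheory GRing.Theory Num.Theory.
Local Open Scope ring_scope.

Section Fan.
Variable R : realType.

(* A complete pointed fan in R^2 with n regions R_0..R_{n-1} (ccw), given by
   the angle th0 of its first ray and its profile beta_0..beta_{n-1}.
   Ray k (k < n) has angle th0 + beta_0 + ... + beta_{k-1};
   region R_i is the cone between ray i and ray (i+1 mod n), of angle beta_i. *)
Definition is_complete_pointed_fan (n : nat) (beta : nat -> R) : Prop :=
  (forall i, (i < n)%N -> 0 < beta i < pi) /\ \sum_(i < n) beta i = 2 * pi.

Definition ray_angle (th0 : R) (beta : nat -> R) (k : nat) : R :=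
  th0 + \sum_(j < k) beta j.

Definition dir (phi : R) : 'rV[R]_2 :=
  \row_(i < 2) (if i == 0 :> nat then cos phi else sin phi).

(* reflection in the line spanned by the unit vector u, acting on row vectors:
   v *m refl u = 2 (v . u) u - v *)
Definition refl (u : 'rV[R]_2) : 'M[R]_2 := 2%:R *: (u^T *m u) - 1%:M.

Definition adj (n : nat) (a b : nat) : bool :=
  [&& (a < n)%N, (b < n)%N & (b == (a.+1 %% n)%N) || (a == (b.+1 %% n)%N)].

(* s_{R_a R_b}: reflection in the line spanned by the ray shared by R_a, R_b
   (for adjacent a, b and n >= 3) *)
Definition sref (n : nat) (th0 : R) (beta : nat -> R) (a b : nat) : 'M[R]_2 :=
  if b == (a.+1 %% n)%N then refl (dir (ray_angle th0 beta b))
  else refl (dir (ray_angle th0 beta a)).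

(* For the walk i_0 ... i_k, v *m walk_mx [:: i_0; ...; i_k] = t_W(v)
   = s_{i_k i_{k-1}} ( ... s_{i_1 i_0} (v)) *)
Fixpoint walk_mx (n : nat) (th0 : R) (beta : nat -> R) (w : seq nat) : 'M[R]_2 :=
  match w with
  | a :: ((b :: _) as w') => sref n th0 beta b a *m walk_mx n th0 beta w'
  | _ => 1%:M
  end.

(* 0 :: w is a closed walk starting (and ending) at R_0 *)
Definition closed_walk0 (n : nat) (w : seq nat) : bool :=
  path (adj n) 0%N w && (last 0%N w == 0%N).

Definition InSpc (n : nat) (th0 : R) (beta : nat -> R) (v : 'rV[R]_2) : Prop :=
  forall w, closed_walk0 n w -> v *m walk_mx n th0 beta (0%N :: w) = v.

Definition virtually_inscribable (n : nat) (th0 : R) (beta : nat -> R) : Prop :=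
  exists v : 'rV[R]_2, v != 0 /\ InSpc n th0 beta v.

Definition InSpc_dim (n : nat) (th0 : R) (beta : nat -> R) (d : nat) : Prop :=
  exists B : 'M[R]_(d, 2), row_free B /\
    forall v : 'rV[R]_2, InSpc n th0 beta v <-> (v <= B)%MS.

End Fan.

From HB Require Import structures.
From mathcomp Require Import all_boot all_order all_algebra.
From mathcomp Require Import all_classical all_reals.
From mathcomp Require Import trigo.
From mathcomp Require Import ring lra zify.
Import Order.TTheory GRing.Theory Num.Theory.
Local Open Scope ring_scope.
Set Implicit Arguments. Unset Strict Implicit. Unset Printing Implicit Defensive.

(* Reflections in two lines at angle a compose to the rotation by 2a.  The
   adjacency graph of the regions is a single cycle and every s_{R_iR_j} is an
   involution, so a vector fixed by the monodromy L of the walk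
   R_0 R_1 ... R_{n-1} R_0 is transported consistently to every region, and
   InSpc(F) is exactly the fixed space of L.  As a product of n reflections, L is
   a reflection when n is odd, with a line as fixed space.  When n is even, L is
   the rotation by -2(beta_0 + beta_2 + ... + beta_{n-2}); since that sum lies in
   (0, 2 pi), L fixes a nonzero vector iff the sum is pi, and L is then the
   identity. *)

Section PlaneIsometries.
Variable R : realType.

Definition rotmx (t : R) : 'M[R]_2 :=
  \matrix_(i < 2, j < 2)
    if i == 0 :> nat then (if j == 0 :> nat then cos t else sin t)
    else (if j == 0 :> nat then - sin t else cos t).

(* the reflection in the line of angle [t / 2], acting on row vectors *)
Definition reflmx (t : R) : 'M[R]_2 :=
  \matrix_(i < 2, j < 2)
    if i == 0 :> nat then (if j == 0 :> nat then cos t else sin t)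
    else (if j == 0 :> nat then sin t else - cos t).

Local Ltac mx2_entries :=
  apply/matrixP => -[[|[|//]]] ? -[[|[|//]]] ?;
  rewrite !mxE ?big_ord_recr ?big_ord0 /= ?mxE /=.

Lemma reflmxM (a b : R) : reflmx a *m reflmx b = rotmx (b - a).
Proof. by mx2_entries; rewrite ?cosB ?sinB; ring. Qed.

Lemma rotmxM (a b : R) : rotmx a *m rotmx b = rotmx (a + b).
Proof. by mx2_entries; rewrite ?cosD ?sinD; ring. Qed.

Lemma rotmx_reflmx (t a : R) : rotmx t *m reflmx a = reflmx (a - t).
Proof. by mx2_entries; rewrite ?cosB ?sinB; ring. Qed.

Lemma rotmx_cos1 (t : R) : cos t = 1 -> rotmx t = 1%:M.
Proof.
move=> c1; have s0 : sin t = 0.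
  by apply/eqP; rewrite -sqrf_eq0 sin2cos2 c1 expr1n subrr.
by mx2_entries; rewrite ?c1 ?s0 ?oppr0.
Qed.

Lemma refl_dir (p : R) : refl (dir p) = reflmx (p *+ 2).
Proof.
rewrite /refl /dir; mx2_entries; rewrite ?cos_mulr2n ?sin_mulr2n; try ring.
by rewrite -expr2 sin2cos2; ring.
Qed.

Lemma refl_dirK (p : R) : refl (dir p) *m refl (dir p) = 1%:M.
Proof. by rewrite refl_dir reflmxM subrr rotmx_cos1 ?cos0. Qed.

Lemma dir_unit (p : R) : dir p *m (dir p)^T = 1%:M.
Proof.
apply/matrixP => i j; rewrite !ord1 !mxE !big_ord_recr big_ord0 /= !mxE /=.
by rewrite -!expr2 add0r cos2Dsin2.
Qed.

Lemma dir_neq0 (p : R) : dir p != 0.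
Proof.
apply/eqP => p0; have := dir_unit p; rewrite p0 mul0mx => /matrixP/(_ 0 0).
by rewrite !mxE => /eqP; rewrite eq_sym oner_eq0.
Qed.

Lemma refl_fixed (u v : 'rV[R]_2) : u *m u^T = 1%:M ->
  v *m refl u = v <-> (v <= u)%MS.
Proof.
move=> u_unit.
have -> : v *m refl u = 2%:R *: (v *m u^T *m u) - v.
  by rewrite /refl mulmxBr mulmx1 -scalemxAr mulmxA.
split=> [fix_v | /submxP [w ->]].
  apply/submxP; exists (v *m u^T); apply/eqP; rewrite eq_sym -subr_eq0.
  have : 2%:R *: (v *m u^T *m u - v) = 0.
    by rewrite scalerBr [2%:R *: v]scaler_nat mulr2n opprD addrA fix_v subrr.
  by move/eqP; rewrite scaler_eq0 pnatr_eq0.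
by rewrite -!mulmxA [u *m (u^T *m u)]mulmxA u_unit mul1mx scaler_nat mulr2n addrK.
Qed.

Lemma rotmx_fixed (v : 'rV[R]_2) (t : R) : v != 0 -> v *m rotmx t = v -> cos t = 1.
Proof.
move=> v_neq0 /rowP fix_v; have := fix_v 0; have := fix_v 1.
rewrite !mxE !big_ord_recl !big_ord0 /= !mxE /= !addr0 (_ : lift 0 0 = 1);
  last exact: val_inj.
set a := v 0 0; set b := v 0 1 => fix_b fix_a.
have v_norm : a ^+ 2 + b ^+ 2 != 0.
  apply: contra v_neq0; rewrite paddr_eq0 ?sqr_ge0 // !sqrf_eq0 => /andP [/eqP a0 /eqP b0].
  apply/eqP/rowP => -[[|[|//]] ?]; rewrite mxE; [rewrite -[RHS]a0 | rewrite -[RHS]b0];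
    by congr (v _ _); exact: val_inj.
have : (cos t - 1) * (a ^+ 2 + b ^+ 2) =
    a * (a * cos t + b * - sin t - a) + b * (a * sin t + b * cos t - b) by ring.
rewrite fix_a fix_b !subrr !mulr0 addr0 => /eqP.
by rewrite mulf_eq0 (negbTE v_norm) orbF subr_eq0 => /eqP.
Qed.

End PlaneIsometries.

Lemma sin_eq0_pi (R : realType) (x : R) : 0 < x < pi *+ 2 -> sin x = 0 -> x = pi.
Proof.
move=> /andP [x_gt0 x_lt2pi] sx0.
case: (ltgtP x pi) => // [x_ltpi | x_gtpi].
  by have := @sin_gt0_pi R x; rewrite x_gt0 x_ltpi sx0 ltxx => /(_ isT).
have := @sin_gt0_pi R (x - pi).
by rewrite sinB sinpi cospi sx0 subr_gt0 x_gtpi ltrBlDr -mulr2n x_lt2pi; lra.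
Qed.

Lemma last_iota m j : last m (iota m.+1 j) = (m + j)%N.
Proof. by elim: j m => [|j IH] m /=; rewrite ?addn0 // IH addnS. Qed.

Lemma sum_ord_recr_cond (V : nmodType) (P : pred nat) (F : nat -> V) j :
  \sum_(i < j.+1 | P i) F i = \sum_(i < j | P i) F i + (if P j then F j else 0).
Proof. by rewrite big_mkcond big_ord_recr -big_mkcond. Qed.

Section Walks.
Variables (R : realType) (n : nat) (th0 : R) (beta : nat -> R).
Hypothesis n_ge3 : (3 <= n)%N.

Definition ray_refl (k : nat) : 'M[R]_2 := refl (dir (ray_angle th0 beta k)).

Definition forward_mx (j : nat) : 'M[R]_2 := walk_mx n th0 beta (0%N :: iota 1 j).

Definition loop_mx : 'M[R]_2 := forward_mx n.-1 *m ray_refl 0.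

Lemma walk_mx_cons x y w :
  walk_mx n th0 beta (x :: y :: w) = sref n th0 beta y x *m walk_mx n th0 beta (y :: w).
Proof. by []. Qed.

Lemma walk_mx_rcons x w b :
  walk_mx n th0 beta (x :: rcons w b) =
  walk_mx n th0 beta (x :: w) *m sref n th0 beta b (last x w).
Proof.
elim: w x => [|y w IH] x; first by rewrite /= mulmx1 mul1mx.
by rewrite rcons_cons !walk_mx_cons IH mulmxA.
Qed.

Lemma sref_succ a : sref n th0 beta a (a.+1 %% n) = ray_refl (a.+1 %% n).
Proof. by rewrite /sref eqxx. Qed.

Lemma sref_succ_sym a : (a < n)%N -> sref n th0 beta (a.+1 %% n) a = ray_refl (a.+1 %% n).
Proof.
move=> a_lt_n; rewrite /sref; case: eqP => // a_eq; exfalso; move: a_eq.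
have [a1_lt_n | a1_eq_n] : (a.+1 < n)%N \/ a.+1 = n by lia.
  rewrite (modn_small a1_lt_n).
  have [a2_lt_n | a2_eq_n] : (a.+2 < n)%N \/ a.+2 = n by lia.
    by rewrite modn_small //; lia.
  by rewrite a2_eq_n modnn; lia.
by rewrite a1_eq_n modnn modn_small //; lia.
Qed.

Lemma forward_mx0 : forward_mx 0 = 1%:M.
Proof. by []. Qed.

Lemma forward_mx_succ j : (j.+1 < n)%N -> forward_mx j.+1 = forward_mx j *m ray_refl j.+1.
Proof.
move=> j1_n; rewrite /forward_mx.
have -> : iota 1 j.+1 = rcons (iota 1 j) j.+1 by rewrite -cats1 -{1}(addn1 j) iotaD.
rewrite walk_mx_rcons last_iota.
by rewrite -(modn_small j1_n) sref_succ_sym 1?ltnW // add1n.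
Qed.

Lemma path_adj_iota m k : (m + k < n)%N -> path (adj n) m (iota m.+1 k).
Proof.
elim: k m => [|k IH] m mk_n //=; rewrite IH; last by lia.
by rewrite /adj modn_small ?eqxx /=; lia.
Qed.

Lemma closed_walk0_loop : closed_walk0 n (rcons (iota 1 n.-1) 0%N).
Proof.
rewrite /closed_walk0 last_rcons eqxx andbT rcons_path path_adj_iota; last by lia.
by rewrite last_iota add0n /adj prednK ?modnn ?eqxx /=; lia.
Qed.

Lemma walk_mx_loop : walk_mx n th0 beta (0%N :: rcons (iota 1 n.-1) 0%N) = loop_mx.
Proof.
rewrite walk_mx_rcons last_iota add0n.
have := sref_succ_sym (a := n.-1); rewrite prednK ?modnn; last by lia.
by move=> /(_ (leqnn n)) ->.
Qed.

Section LoopInvariant.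
Variable v : 'rV[R]_2.
Hypothesis v_loop : v *m loop_mx = v.

Lemma forward_mx_loop_succ x : (x < n)%N ->
  v *m forward_mx x *m ray_refl (x.+1 %% n) = v *m forward_mx (x.+1 %% n).
Proof.
move=> x_lt_n; have [x1_lt_n | x1_eq_n] : (x.+1 < n)%N \/ x.+1 = n by lia.
  by rewrite modn_small // forward_mx_succ // mulmxA.
have x_pred : x = n.-1 by lia.
by rewrite x1_eq_n modnn forward_mx0 mulmx1 -mulmxA x_pred.
Qed.

Lemma forward_mx_adj x y : adj n x y ->
  v *m forward_mx x *m sref n th0 beta y x = v *m forward_mx y.
Proof.
case/and3P=> x_lt_n y_lt_n /orP [/eqP -> | /eqP ->].
  by rewrite sref_succ_sym // forward_mx_loop_succ.
by rewrite sref_succ -forward_mx_loop_succ // -mulmxA refl_dirK mulmx1.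
Qed.

Lemma forward_mx_path x w : (x < n)%N -> path (adj n) x w ->
  v *m forward_mx x *m walk_mx n th0 beta (x :: w) = v *m forward_mx (last x w).
Proof.
elim: w x => [|y w IH] x x_lt_n; first by rewrite /= mulmx1.
case/andP=> xy yw; rewrite walk_mx_cons mulmxA forward_mx_adj // IH //.
by case/and3P: xy.
Qed.

End LoopInvariant.

Lemma InSpc_loopE v : InSpc n th0 beta v <-> v *m loop_mx = v.
Proof.
split=> [InSpc_v | v_loop w /andP [walk_w /eqP last_w]].
  by rewrite -walk_mx_loop; apply: InSpc_v; exact: closed_walk0_loop.
have := forward_mx_path v_loop (ltnW (ltnW n_ge3)) walk_w.
by rewrite last_w forward_mx0 !mulmx1.
Qed.

Lemma ray_angleS j : ray_angle th0 beta j.+1 = ray_angle th0 beta j + beta j.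
Proof. by rewrite /ray_angle big_ord_recr addrA. Qed.

Lemma ray_reflM j : ray_refl j *m ray_refl j.+1 = rotmx (beta j *+ 2).
Proof. by rewrite /ray_refl !refl_dir reflmxM ray_angleS mulrnDl addrC addKr. Qed.

Lemma forward_mx_double k : (k.*2 < n)%N ->
  forward_mx k.*2 = rotmx ((\sum_(i < k.*2 | odd i) beta i) *+ 2).
Proof.
elim: k => [|k IH] k2_lt_n.
  by rewrite forward_mx0 big_ord0 mul0rn rotmx_cos1 ?cos0.
rewrite doubleS !forward_mx_succ; [|lia..].
rewrite -mulmxA ray_reflM IH; last by lia.
by rewrite rotmxM !sum_ord_recr_cond /= odd_double addr0 mulrnDl.
Qed.

Lemma loop_mx_odd : odd n -> exists p, loop_mx = refl (dir p).
Proof.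
move=> n_odd; have n_pred : n.-1 = n./2.*2 by rewrite -{1}(odd_double_half n) n_odd.
exists (ray_angle th0 beta 0 - \sum_(i < n./2.*2 | odd i) beta i).
rewrite /loop_mx n_pred forward_mx_double; last by lia.
by rewrite /ray_refl !refl_dir rotmx_reflmx mulrnBl.
Qed.

Lemma loop_mx_even : ~~ odd n -> loop_mx = rotmx (- (\sum_(i < n | ~~ odd i) beta i) *+ 2).
Proof.
move=> n_even; have [k n_eq] : exists k, n = k.*2.+2.
  move: (odd_double_half n); rewrite (negbTE n_even) add0n => n_half.
  by exists n./2.-1; lia.
rewrite /loop_mx n_eq /= forward_mx_succ ?forward_mx_double; [|lia..].
rewrite -mulmxA /ray_refl !refl_dir reflmxM rotmxM /ray_angle big_ord0 addr0.
rewrite [X in th0 + X](bigID (fun i : 'I__ => odd i)) /= !sum_ord_recr_cond.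
rewrite !(sum_ord_recr_cond (fun i => ~~ odd i)) /= odd_double /=.
by congr rotmx; ring.
Qed.

End Walks.

Lemma sum_even_bounds (R : realType) (n : nat) (beta : nat -> R) : (1 < n)%N ->
  is_complete_pointed_fan n beta -> 0 < \sum_(i < n | ~~ odd i) beta i < pi *+ 2.
Proof.
move=> n_gt1 [beta_bounds sum_beta].
have sum_gt0 (P : pred nat) (j : 'I_n) : P j -> 0 < \sum_(i < n | P i) beta i.
  move=> Pj; rewrite (bigD1 j) //=; have /andP [beta_j_gt0 _] := beta_bounds j (ltn_ord j).
  rewrite ltr_wpDr //; apply: sumr_ge0 => i _.
  by have /andP [/ltW] := beta_bounds i (ltn_ord i).
have even_gt0 := sum_gt0 (fun i => ~~ odd i) (Ordinal (ltnW n_gt1)) isT.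
have odd_gt0 := sum_gt0 odd (Ordinal n_gt1) isT.
move: sum_beta; rewrite (bigID (fun i : 'I_n => odd i)) /= mulr2n; lra.
Qed.

Lemma InSpc_dim_inscribable (R : realType) n (th0 : R) beta d : (0 < d)%N ->
  InSpc_dim n th0 beta d -> virtually_inscribable n th0 beta.
Proof.
move=> d_gt0 [B [B_free InSpcB]]; exists (row (Ordinal d_gt0) B).
split; last exact/InSpcB/row_sub.
apply/eqP; rewrite rowE -(mul0mx _ B) => /(row_free_inj B_free)/matrixP.
move=> /(_ 0 (Ordinal d_gt0)).
by rewrite !mxE !eqxx => /eqP; rewrite oner_eq0.
Qed.

Lemma InSpc_dim_full (R : realType) n (th0 : R) beta :
  (forall v, InSpc n th0 beta v) -> InSpc_dim n th0 beta 2.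
Proof.
move=> InSpc_all; exists 1%:M; split; first by rewrite row_free_unit unitmx1.
by move=> v; split=> _; [exact: submx1 | exact: InSpc_all].
Qed.

Section Inscribed.
Variables (R : realType) (n : nat) (th0 : R) (beta : nat -> R).
Hypothesis n_ge3 : (3 <= n)%N.

Lemma InSpc_dim_odd : odd n -> InSpc_dim n th0 beta 1.
Proof.
move=> n_odd; have [p loop_p] := loop_mx_odd th0 beta n_ge3 n_odd.
exists (dir p); split; first by rewrite /row_free rank_rV dir_neq0.
by move=> v; rewrite InSpc_loopE // loop_p; exact: refl_fixed (dir_unit p).
Qed.

Lemma inscribable_even_sum : is_complete_pointed_fan n beta -> ~~ odd n ->
  virtually_inscribable n th0 beta -> \sum_(i < n | ~~ odd i) beta i = pi.
Proof.
move=> fan n_even [v [v_neq0]]; rewrite InSpc_loopE // loop_mx_even //.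
move=> /(rotmx_fixed v_neq0); rewrite mulNrn cosN cos_mulr2n => cos2_E.
apply: sin_eq0_pi; first by apply: sum_even_bounds fan; lia.
by apply/eqP; rewrite -sqrf_eq0 sin2cos2; apply/eqP; lra.
Qed.

Lemma InSpc_dim_even : ~~ odd n -> \sum_(i < n | ~~ odd i) beta i = pi ->
  InSpc_dim n th0 beta 2.
Proof.
move=> n_even sum_pi; apply: InSpc_dim_full => v.
by rewrite InSpc_loopE // loop_mx_even // sum_pi rotmx_cos1 ?mulmx1 // mulNrn cosN cos2pi.
Qed.

End Inscribed.

Theorem proposition3p1 (R : realType) (n : nat) (th0 : R) (beta : nat -> R) :
  (3 <= n)%N -> is_complete_pointed_fan n beta ->
  ((odd n -> virtually_inscribable n th0 beta /\ InSpc_dim n th0 beta 1) /\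
   (~~ odd n ->
      (virtually_inscribable n th0 beta <-> \sum_(i < n | ~~ odd i) beta i = pi) /\
      (virtually_inscribable n th0 beta -> InSpc_dim n th0 beta 2))).
Proof.
move=> n_ge3 fan; split=> [n_odd | n_even].
  have dim1 : InSpc_dim n th0 beta 1 by exact: InSpc_dim_odd.
  by split=> //; apply: InSpc_dim_inscribable dim1.
have inscribable_sum :
    virtually_inscribable n th0 beta -> \sum_(i < n | ~~ odd i) beta i = pi.
  exact: inscribable_even_sum.
have sum_dim2 : \sum_(i < n | ~~ odd i) beta i = pi -> InSpc_dim n th0 beta 2.
  exact: InSpc_dim_even.
split=> [|/inscribable_sum/sum_dim2 //]; split=> [// | /sum_dim2].
exact: InSpc_dim_inscribable.
Qed.
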